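(* Let $\mu>0$, $T_s>0$, $T_w>0$, let $Q_w\ge 1$ be an integer, and for $\rho\in(0,1)$ define $$f(\rho)=\frac{\Gamma(Q_w+1,\mu\rho T_s)-\mu\rho T_s\,\Gamma(Q_w,\mu\rho T_s)}{\mu\rho\,\Gamma(Q_w)},$$ and $b=T_s+T_w$, where $\Gamma(\cdot)$ is the Gamma function and $\Gamma(s,x)=\int_x^\infty u^{s-1}e^{-u}\,du$ is the upper incomplete Gamma function. Then $f''(\rho)\bigl(f(\rho)+b\bigr)\ge 2\bigl(f'(\rho)\bigr)^2$ for all $\rho\in(0,1)$; consequently, for any $\sigma_{\mathrm{off}}\in[0,1)$, the function $E(\rho)=1-(1-\sigma_{\mathrm{off}})(1-\rho)\dfrac{f(\rho)}{f(\rho)+T_s+T_w}$ is concave on $(0,1)$.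
   Context: This $f$ is the exact mean low-power time of an Energy Efficient Ethernet link under the ''burst transmission'' policy in the high-load regime with Poisson arrivals at normalized load $\rho$, where $\mu^{-1}$ is the mean packet transmission time, $T_s,T_w$ are the sleep and wake transition times, $Q_w$ is the burst size threshold, and $\sigma_{\mathrm{off}}$ is the relative power in the idle state; $E(\rho)$ is the normalized link energy consumption. *)

From Stdlib Require Import Reals.
From Coquelicot Require Import Coquelicot.
Open Scope R_scope.

Definition upper_inc_gamma (s : nat) (x : R) : R :=
  RInt_gen (fun u => u ^ (s - 1) * exp (- u)) (at_point x) (Rbar_locally p_infty).

Definition Gamma_fun (s : nat) : R := upper_inc_gamma s 0.

Definition f_lowpower (mu Ts : R) (Qw : nat) (rho : R) : R :=
  (upper_inc_gamma (Qw + 1) (mu * rho * Ts)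
     - mu * rho * Ts * upper_inc_gamma Qw (mu * rho * Ts))
  / (mu * rho * Gamma_fun Qw).

Definition E_energy (mu Ts Tw sigma_off : R) (Qw : nat) (rho : R) : R :=
  1 - (1 - sigma_off) * (1 - rho) *
      (f_lowpower mu Ts Qw rho / (f_lowpower mu Ts Qw rho + Ts + Tw)).

Definition concave_on (a b : R) (g : R -> R) : Prop :=
  forall x y t, a < x < b -> a < y < b -> 0 <= t <= 1 ->
    t * g x + (1 - t) * g y <= g (t * x + (1 - t) * y).

From Stdlib Require Import Reals Lra Lia Factorial.
From Coquelicot Require Import Coquelicot.
Open Scope R_scope.

(** For an integer parameter the upper incomplete Gamma function is elementary,
    [Gamma(n+1, x) = n! e^(-x) (1 + x + ... + x^n/n!)], so that with [c = mu Ts]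
    and [Qw = m + 1] one gets [f(rho) = phi(c rho) / (mu rho)] for an explicit
    kernel [phi] with [phi >= 0], [0 <= -phi' <= 1] and [phi'' >= 0].  Clearing
    denominators, [f'' (f + b) - 2 f'^2] becomes a polynomial in [rho], [phi],
    [-phi'], [phi''] whose only negative terms are dominated because
    [-phi' <= 1] and [b mu >= c].  That inequality says precisely that
    [G = f / (f + b)] is convex; since also [G' <= 0], the second derivative
    [-2 G' + (1 - rho) G''] of [(1 - rho) G] is nonnegative, so
    [E = 1 - (1 - sigma_off) (1 - rho) G] is concave. *)

Definition exp_taylor (n : nat) (x : R) : R :=
  sum_f_R0 (fun k => x ^ k / INR (fact k)) n.

Lemma exp_taylor_S (n : nat) (x : R) :
  exp_taylor (S n) x = exp_taylor n x + x ^ S n / INR (fact (S n)).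
Proof. reflexivity. Qed.

Lemma exp_taylor_at0 (n : nat) : exp_taylor n 0 = 1.
Proof.
  induction n as [|n IH].
  - unfold exp_taylor; simpl; field.
  - rewrite exp_taylor_S, IH; simpl; lra.
Qed.

Lemma pow_div_fact_ge0 (n : nat) (x : R) : 0 <= x -> 0 <= x ^ n / INR (fact n).
Proof.
  intro Hx; apply Rdiv_le_0_compat; [apply pow_le, Hx | apply INR_fact_lt_0].
Qed.

Lemma exp_taylor_ge0 (n : nat) (x : R) : 0 <= x -> 0 <= exp_taylor n x.
Proof.
  intro Hx; induction n as [|n IH].
  - unfold exp_taylor; simpl; lra.
  - rewrite exp_taylor_S; pose proof (pow_div_fact_ge0 (S n) x Hx); lra.
Qed.

Lemma exp_taylor_ge_pow (n : nat) (x : R) : 0 <= x -> x ^ n / INR (fact n) <= exp_taylor n x.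
Proof.
  intro Hx; destruct n as [|n].
  - unfold exp_taylor; simpl; lra.
  - rewrite exp_taylor_S; pose proof (exp_taylor_ge0 n x Hx); lra.
Qed.

Lemma exp_taylor_le_pow (n : nat) (x : R) : 1 <= x -> exp_taylor n x <= INR (S n) * x ^ n.
Proof.
  intro Hx; induction n as [|n IH].
  - unfold exp_taylor; simpl; lra.
  - rewrite exp_taylor_S, (S_INR (S n)).
    assert (Hpow : x ^ n <= x ^ S n).
    { simpl; pose proof (pow_le x n ltac:(lra)); nra. }
    assert (Hterm : x ^ S n / INR (fact (S n)) <= x ^ S n).
    { pose proof (pow_le x (S n) ltac:(lra)).
      assert (1 <= INR (fact (S n))) by (apply (le_INR 1), lt_O_fact).
      unfold Rdiv; rewrite <- (Rmult_1_r (x ^ S n)) at 2.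
      apply Rmult_le_compat_l; [lra|].
      rewrite <- Rinv_1; apply Rinv_le_contravar; lra. }
    pose proof (pos_INR (S n)); nra.
Qed.

Lemma pow_le_fact_mul_exp (n : nat) (x : R) : 0 <= x -> x ^ n <= INR (fact n) * exp x.
Proof.
  intro Hx; pose proof (INR_fact_lt_0 n).
  pose proof (exp_taylor_ge_pow n x Hx); pose proof (exp_ge_taylor x n Hx).
  apply (Rmult_le_reg_r (/ INR (fact n))); [apply Rinv_0_lt_compat; lra|].
  replace (INR (fact n) * exp x * / INR (fact n)) with (exp x) by (field; lra).
  unfold exp_taylor in *; lra.
Qed.

Lemma is_derive_pow_div (n : nat) (c : R) (x : R) :
  is_derive (fun t => t ^ S n / c) x (INR (S n) * x ^ n / c).
Proof. auto_derive; auto; rewrite S_INR; destruct n; simpl; unfold Rdiv; ring. Qed.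

Lemma is_derive_exp_taylor (n : nat) (x : R) : is_derive (exp_taylor (S n)) x (exp_taylor n x).
Proof.
  induction n as [|n IH].
  - unfold exp_taylor; simpl; auto_derive; auto; field.
  - apply (is_derive_ext (fun t => exp_taylor (S n) t + t ^ S (S n) / INR (fact (S (S n))))).
    { intro t; now rewrite (exp_taylor_S (S n)). }
    replace (exp_taylor (S n) x)
      with (exp_taylor n x + INR (S (S n)) * x ^ S n / INR (fact (S (S n)))).
    { exact (is_derive_plus _ _ _ _ _ IH (is_derive_pow_div _ _ x)). }
    rewrite exp_taylor_S, (fact_simpl (S n)), mult_INR.
    pose proof (INR_fact_lt_0 (S n)); pose proof (pos_INR (S n)).
    rewrite S_INR; field; lra.
Qed.

Definition upper_gamma_nat (n : nat) (x : R) : R :=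
  INR (fact n) * exp (- x) * exp_taylor n x.

Lemma is_derive_upper_gamma_nat (n : nat) (x : R) :
  is_derive (upper_gamma_nat n) x (- (x ^ n * exp (- x))).
Proof.
  unfold upper_gamma_nat; destruct n as [|n].
  - apply (is_derive_ext (fun t => exp (- t))).
    { intro t; unfold exp_taylor; simpl; field. }
    auto_derive; auto; simpl; ring.
  - pose proof (is_derive_exp_taylor n x) as Hd.
    auto_derive; [exists (exp_taylor n x); exact Hd|].
    replace (Derive (fun t => exp_taylor (S n) t) x) with (exp_taylor n x)
      by (symmetry; apply is_derive_unique, Hd).
    rewrite exp_taylor_S.
    change (fact n + n * fact n)%nat with (fact (S n)).
    pose proof (INR_fact_lt_0 (S n)); field; lra.
Qed.

Lemma Derive_upper_gamma_nat (n : nat) (x : R) :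
  Derive (fun t => upper_gamma_nat n t) x = - (x ^ n * exp (- x)).
Proof. apply is_derive_unique, is_derive_upper_gamma_nat. Qed.

Lemma ex_derive_upper_gamma_nat (n : nat) (x : R) : ex_derive (fun t => upper_gamma_nat n t) x.
Proof. eexists; apply is_derive_upper_gamma_nat. Qed.

Lemma exp_opp_mul_exp_taylor_le (n : nat) (x : R) :
  1 <= x -> exp (- x) * exp_taylor n x <= INR (S n) * INR (fact (S n)) / x.
Proof.
  intro Hx.
  assert (Hbound : exp_taylor n x * x <= INR (S n) * INR (fact (S n)) * exp x).
  { pose proof (exp_taylor_le_pow n x Hx); pose proof (pow_le_fact_mul_exp (S n) x ltac:(lra)).
    pose proof (pos_INR (S n)); simpl pow in *; nra. }
  pose proof (exp_pos x).
  apply (Rmult_le_reg_r (exp x * x)); [nra|].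
  rewrite exp_Ropp.
  replace (/ exp x * exp_taylor n x * (exp x * x)) with (exp_taylor n x * x) by (field; lra).
  replace (INR (S n) * INR (fact (S n)) / x * (exp x * x))
    with (INR (S n) * INR (fact (S n)) * exp x) by (field; lra).
  exact Hbound.
Qed.

Lemma is_lim_upper_gamma_nat (n : nat) : is_lim (upper_gamma_nat n) p_infty 0.
Proof.
  set (C := INR (fact n) * (INR (S n) * INR (fact (S n)))).
  apply (is_lim_le_le_loc (fun _ => 0) (fun x => C * / x)).
  - exists 1; intros x Hx; unfold upper_gamma_nat, C.
    pose proof (INR_fact_lt_0 n); pose proof (exp_pos (- x)).
    pose proof (exp_taylor_ge0 n x ltac:(lra)).
    pose proof (exp_opp_mul_exp_taylor_le n x ltac:(lra)).
    split; [apply Rmult_le_pos; [apply Rmult_le_pos|]; lra|].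
    replace (INR (fact n) * (INR (S n) * INR (fact (S n))) * / x)
      with (INR (fact n) * (INR (S n) * INR (fact (S n)) / x)) by (unfold Rdiv; ring).
    rewrite Rmult_assoc; apply Rmult_le_compat_l; lra.
  - apply is_lim_const.
  - replace (Finite 0) with (Rbar_mult C (Rbar_inv p_infty)) by (simpl; f_equal; ring).
    apply is_lim_scal_l, is_lim_inv; [apply is_lim_id | discriminate].
Qed.

Lemma upper_inc_gamma_S (n : nat) (x : R) : upper_inc_gamma (S n) x = upper_gamma_nat n x.
Proof.
  unfold upper_inc_gamma; rewrite Nat.sub_succ, Nat.sub_0_r.
  set (G t := - upper_gamma_nat n t).
  assert (HG : forall t, is_derive G t (t ^ n * exp (- t))).
  { intro t; rewrite <- Ropp_involutive.
    exact (is_derive_opp (upper_gamma_nat n) t _ (is_derive_upper_gamma_nat n t)). }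
  apply is_RInt_gen_unique.
  replace (upper_gamma_nat n x) with (0 - G x) by (unfold G; ring).
  apply (is_RInt_gen_ext (Derive G)).
  - apply filter_forall; intros ab t _; apply is_derive_unique, HG.
  - apply is_RInt_gen_Derive.
    + apply filter_forall; intros ab t _; eexists; apply HG.
    + apply filter_forall; intros ab t _.
      apply (continuous_ext (fun u => u ^ n * exp (- u))).
      { intro u; symmetry; apply is_derive_unique, HG. }
      apply (ex_derive_continuous (fun u => u ^ n * exp (- u))); auto_derive; auto.
    + intros P HP; exact (locally_singleton _ _ HP).
    + replace (locally 0) with (Rbar_locally (Finite (- 0))) by (rewrite Ropp_0; reflexivity).
      exact (is_lim_opp _ p_infty 0 (is_lim_upper_gamma_nat n)).
Qed.

Lemma Gamma_fun_S (n : nat) : Gamma_fun (S n) = INR (fact n).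
Proof.
  unfold Gamma_fun; rewrite upper_inc_gamma_S; unfold upper_gamma_nat.
  rewrite exp_taylor_at0, Ropp_0, exp_0; ring.
Qed.

(** The kernel [phi] of the proof idea, for [Qw = m + 1]; [lowpower_kernel1] and
    [lowpower_kernel2] are its first two derivatives. *)
Definition lowpower_kernel (m : nat) (x : R) : R :=
  (upper_gamma_nat (S m) x - x * upper_gamma_nat m x) / INR (fact m).

Definition lowpower_kernel1 (m : nat) (x : R) : R := - (exp (- x) * exp_taylor m x).

Definition lowpower_kernel2 (m : nat) (x : R) : R := x ^ m * exp (- x) / INR (fact m).

Lemma lowpower_kernel1_eq (m : nat) (x : R) :
  lowpower_kernel1 m x = - upper_gamma_nat m x / INR (fact m).
Proof.
  unfold lowpower_kernel1, upper_gamma_nat; pose proof (INR_fact_lt_0 m); field; lra.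
Qed.

Lemma is_derive_lowpower_kernel (m : nat) (x : R) :
  is_derive (lowpower_kernel m) x (lowpower_kernel1 m x).
Proof.
  rewrite lowpower_kernel1_eq; unfold lowpower_kernel; pose proof (INR_fact_lt_0 m).
  auto_derive; [repeat split; apply ex_derive_upper_gamma_nat|].
  rewrite !Derive_upper_gamma_nat; simpl; field; lra.
Qed.

Lemma is_derive_lowpower_kernel1 (m : nat) (x : R) :
  is_derive (lowpower_kernel1 m) x (lowpower_kernel2 m x).
Proof.
  apply (is_derive_ext (fun t => - upper_gamma_nat m t / INR (fact m))).
  { intro t; symmetry; apply lowpower_kernel1_eq. }
  unfold lowpower_kernel2; pose proof (INR_fact_lt_0 m).
  auto_derive; [apply ex_derive_upper_gamma_nat|].
  rewrite Derive_upper_gamma_nat; field; lra.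
Qed.

Lemma mul_exp_taylor_le (m : nat) (x : R) :
  0 <= x -> x * exp_taylor m x <= INR (S m) * exp_taylor (S m) x.
Proof.
  intro Hx; induction m as [|m IH].
  - unfold exp_taylor; simpl; lra.
  - assert (Hstep : INR (S (S m)) * exp_taylor (S (S m)) x - x * exp_taylor (S m) x
                    = INR (S m) * exp_taylor (S m) x - x * exp_taylor m x + exp_taylor (S m) x).
    { rewrite (exp_taylor_S (S m)), (exp_taylor_S m), (fact_simpl (S m)), (fact_simpl m).
      rewrite !mult_INR.
      pose proof (INR_fact_lt_0 m); pose proof (pos_INR m).
      rewrite !(S_INR (S m)), !S_INR; simpl pow; field; lra. }
    pose proof (exp_taylor_ge0 (S m) x Hx); lra.
Qed.

Lemma lowpower_kernel_ge0 (m : nat) (x : R) : 0 <= x -> 0 <= lowpower_kernel m x.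
Proof.
  intro Hx.
  replace (lowpower_kernel m x)
    with (exp (- x) * (INR (S m) * exp_taylor (S m) x - x * exp_taylor m x)).
  { pose proof (exp_pos (- x)); pose proof (mul_exp_taylor_le m x Hx); nra. }
  unfold lowpower_kernel, upper_gamma_nat; rewrite fact_simpl, mult_INR.
  pose proof (INR_fact_lt_0 m); field; lra.
Qed.

Lemma lowpower_kernel1_bounds (m : nat) (x : R) :
  0 <= x -> 0 <= - lowpower_kernel1 m x <= 1.
Proof.
  intro Hx; unfold lowpower_kernel1; rewrite Ropp_involutive.
  pose proof (exp_pos (- x)); pose proof (exp_taylor_ge0 m x Hx).
  pose proof (exp_ge_taylor x m Hx); fold (exp_taylor m x) in *.
  assert (exp (- x) * exp x = 1) by (rewrite exp_Ropp; field; apply exp_neq_0).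
  split; nra.
Qed.

Lemma lowpower_kernel2_ge0 (m : nat) (x : R) : 0 <= x -> 0 <= lowpower_kernel2 m x.
Proof.
  intro Hx; unfold lowpower_kernel2.
  apply Rdiv_le_0_compat; [|apply INR_fact_lt_0].
  apply Rmult_le_pos; [apply pow_le, Hx | left; apply exp_pos].
Qed.

Lemma f_lowpower_eq (mu Ts : R) (m : nat) (rho : R) : mu <> 0 -> rho <> 0 ->
  f_lowpower mu Ts (S m) rho = lowpower_kernel m (mu * Ts * rho) / (mu * rho).
Proof.
  intros Hmu Hrho; unfold f_lowpower, lowpower_kernel.
  replace (S m + 1)%nat with (S (S m)) by lia.
  rewrite !upper_inc_gamma_S, Gamma_fun_S.
  replace (mu * rho * Ts) with (mu * Ts * rho) by ring.
  pose proof (INR_fact_lt_0 m); field; lra.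
Qed.

Lemma two_sq_le_mul (c d r p a q : R) :
  0 <= c <= d -> 0 <= r -> 0 <= p -> 0 <= a <= 1 -> 0 <= q ->
  2 * (c * a * r + p) ^ 2 <= (c ^ 2 * q * r ^ 2 + 2 * c * a * r + 2 * p) * (p + d * r).
Proof.
  intros Hc Hr Hp Ha Hq.
  assert (Hca : c * a <= d) by nra.
  assert (Hcar : 0 <= c * a * r) by (apply Rmult_le_pos; nra).
  assert (Hid : (c ^ 2 * q * r ^ 2 + 2 * c * a * r + 2 * p) * (p + d * r) - 2 * (c * a * r + p) ^ 2
                = c ^ 2 * q * r ^ 2 * (p + d * r) + 2 * r * (d - c * a) * (c * a * r + p)) by ring.
  assert (0 <= c ^ 2 * q * r ^ 2 * (p + d * r)).
  { repeat apply Rmult_le_pos; try apply pow2_ge_0; nra. }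
  assert (0 <= 2 * r * (d - c * a) * (c * a * r + p)).
  { repeat apply Rmult_le_pos; lra. }
  lra.
Qed.

Section ScaledQuotient.

Variables (g g1 g2 : R -> R) (c k : R).
Hypothesis Hg : forall y, is_derive g y (g1 y).
Hypothesis Hg1 : forall y, is_derive g1 y (g2 y).

Definition scaled_quot (t : R) : R := g (c * t) / (k * t).

Definition scaled_quot1 (t : R) : R :=
  c * g1 (c * t) / (k * t) - g (c * t) / (k * t ^ 2).

Definition scaled_quot2 (t : R) : R :=
  c ^ 2 * g2 (c * t) / (k * t) - 2 * c * g1 (c * t) / (k * t ^ 2) + 2 * g (c * t) / (k * t ^ 3).

Let Derive_g (y : R) : Derive (fun t => g t) y = g1 y.
Proof. apply is_derive_unique, Hg. Qed.

Let Derive_g1 (y : R) : Derive (fun t => g1 t) y = g2 y.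
Proof. apply is_derive_unique, Hg1. Qed.

Lemma is_derive_scaled_quot (t : R) : k <> 0 -> t <> 0 ->
  is_derive scaled_quot t (scaled_quot1 t).
Proof.
  intros Hk Ht; unfold scaled_quot, scaled_quot1.
  auto_derive.
  { repeat split; try (eexists; apply Hg);
      repeat apply Rmult_integral_contrapositive_currified; auto with real. }
  rewrite Derive_g; field; auto.
Qed.

Lemma is_derive_scaled_quot1 (t : R) : k <> 0 -> t <> 0 ->
  is_derive scaled_quot1 t (scaled_quot2 t).
Proof.
  intros Hk Ht; unfold scaled_quot1, scaled_quot2.
  auto_derive.
  { repeat split; try (eexists; apply Hg); try (eexists; apply Hg1);
      repeat apply Rmult_integral_contrapositive_currified; auto with real. }
  rewrite Derive_g, Derive_g1; field; auto.
Qed.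

Section AtPoint.

Variables (b t : R).
Hypotheses (Hk : 0 < k) (Hc : 0 < c) (Hcb : c <= b * k) (Ht : 0 < t).
Hypotheses (Hg_nonneg : 0 <= g (c * t)) (Hg1_bounds : 0 <= - g1 (c * t) <= 1)
  (Hg2_nonneg : 0 <= g2 (c * t)).

Lemma scaled_quot_ge0 : 0 <= scaled_quot t.
Proof. apply Rdiv_le_0_compat; nra. Qed.

Lemma scaled_quot1_le0 : scaled_quot1 t <= 0.
Proof.
  replace (scaled_quot1 t) with (- (c * (- g1 (c * t)) * t + g (c * t)) / (k * t ^ 2))
    by (unfold scaled_quot1; field; lra).
  assert (0 <= c * (- g1 (c * t)) * t) by (apply Rmult_le_pos; [apply Rmult_le_pos|]; lra).
  apply Rmult_le_0_r; [lra | left; apply Rinv_0_lt_compat].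
  apply Rmult_lt_0_compat; [lra | apply pow_lt; lra].
Qed.

Lemma scaled_quot_derive2_ineq :
  2 * scaled_quot1 t ^ 2 <= scaled_quot2 t * (scaled_quot t + b).
Proof.
  set (p := g (c * t)); set (a := - g1 (c * t)); set (q := g2 (c * t)).
  assert (Hpoly := two_sq_le_mul c (b * k) t p a q ltac:(lra) ltac:(lra)
                     Hg_nonneg Hg1_bounds Hg2_nonneg).
  replace (scaled_quot2 t * (scaled_quot t + b))
    with ((c ^ 2 * q * t ^ 2 + 2 * c * a * t + 2 * p) * (p + b * k * t) / (k ^ 2 * t ^ 4))
    by (unfold scaled_quot, scaled_quot2, a, p, q; field; lra).
  replace (2 * scaled_quot1 t ^ 2) with (2 * (c * a * t + p) ^ 2 / (k ^ 2 * t ^ 4))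
    by (unfold scaled_quot1, a, p; field; lra).
  apply Rmult_le_compat_r; [left; apply Rinv_0_lt_compat | exact Hpoly].
  apply Rmult_lt_0_compat; apply pow_lt; lra.
Qed.

End AtPoint.

End ScaledQuotient.

Section SecondDerivativeTest.

Variables (K K1 K2 : R -> R) (lo hi : R).
Hypothesis HK : forall r, lo < r < hi -> is_derive K r (K1 r).
Hypothesis HK1 : forall r, lo < r < hi -> is_derive K1 r (K2 r).
Hypothesis HK2 : forall r, lo < r < hi -> K2 r <= 0.

Let mean_value (f f' : R -> R) (u v : R) :
  lo < u -> u < v -> v < hi -> (forall r, lo < r < hi -> is_derive f r (f' r)) ->
  exists xi, f v - f u = f' xi * (v - u) /\ u < xi < v.
Proof.
  intros Hu Huv Hv Hf; apply MVT_cor2; [exact Huv|].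
  intros r Hr; apply is_derive_Reals, Hf; lra.
Qed.

Lemma derive_antitone (u v : R) : lo < u -> u <= v -> v < hi -> K1 v <= K1 u.
Proof.
  intros Hu Huv Hv; destruct (Rle_lt_or_eq_dec u v Huv) as [Hlt|<-]; [|lra].
  destruct (mean_value K1 K2 u v Hu Hlt Hv HK1) as [xi [Hmvt Hxi]].
  assert (K2 xi <= 0) by (apply HK2; lra); nra.
Qed.

Lemma le_tangent (z u : R) : lo < z < hi -> lo < u < hi ->
  K u <= K z + K1 z * (u - z).
Proof.
  intros Hz Hu; destruct (Rtotal_order u z) as [Hlt|[->|Hgt]].
  - destruct (mean_value K K1 u z ltac:(lra) Hlt ltac:(lra) HK) as [xi [Hmvt Hxi]].
    assert (K1 z <= K1 xi) by (apply derive_antitone; lra); nra.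
  - lra.
  - destruct (mean_value K K1 z u ltac:(lra) Hgt ltac:(lra) HK) as [xi [Hmvt Hxi]].
    assert (K1 xi <= K1 z) by (apply derive_antitone; lra); nra.
Qed.

Lemma convex_comb_in_interval (x y t : R) : lo < x < hi -> lo < y < hi -> 0 <= t <= 1 ->
  lo < t * x + (1 - t) * y < hi.
Proof.
  intros Hx Hy Ht.
  replace (t * x + (1 - t) * y) with (y + t * (x - y)) by ring.
  destruct (Rle_lt_dec x y); split; nra.
Qed.

Lemma concave_on_of_derive2_nonpos : concave_on lo hi K.
Proof.
  intros x y t Hx Hy Ht; set (z := t * x + (1 - t) * y).
  pose proof (convex_comb_in_interval x y t Hx Hy Ht) as Hz; fold z in Hz.
  assert (Hx' : t * K x <= t * (K z + K1 z * (x - z)))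
    by (apply Rmult_le_compat_l; [lra | apply le_tangent; assumption]).
  assert (Hy' : (1 - t) * K y <= (1 - t) * (K z + K1 z * (y - z)))
    by (apply Rmult_le_compat_l; [lra | apply le_tangent; assumption]).
  assert (Hbal : t * (x - z) + (1 - t) * (y - z) = 0) by (unfold z; ring).
  assert (Hsum : t * (K z + K1 z * (x - z)) + (1 - t) * (K z + K1 z * (y - z)) = K z).
  { transitivity (K z + K1 z * (t * (x - z) + (1 - t) * (y - z))); [ring | rewrite Hbal; ring]. }
  lra.
Qed.

End SecondDerivativeTest.

Section ConcaveComplement.

Variables (G G1 G2 : R -> R) (lo s : R).
Hypothesis HG : forall r, lo < r < 1 -> is_derive G r (G1 r).
Hypothesis HG1 : forall r, lo < r < 1 -> is_derive G1 r (G2 r).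
Hypothesis HG1_nonpos : forall r, lo < r < 1 -> G1 r <= 0.
Hypothesis HG2_nonneg : forall r, lo < r < 1 -> 0 <= G2 r.
Hypothesis Hs : 0 <= s.

Lemma concave_on_one_sub_mul_compl : concave_on lo 1 (fun r => 1 - s * (1 - r) * G r).
Proof.
  apply (concave_on_of_derive2_nonpos _ (fun r => s * G r - s * (1 - r) * G1 r)
           (fun r => 2 * s * G1 r - s * (1 - r) * G2 r)).
  - intros r Hr; pose proof (HG r Hr) as Hd.
    auto_derive; [eexists; exact Hd|].
    replace (Derive (fun t => G t) r) with (G1 r) by (symmetry; apply is_derive_unique, Hd).
    ring.
  - intros r Hr; pose proof (HG r Hr) as Hd; pose proof (HG1 r Hr) as Hd1.
    auto_derive; [repeat split; eexists; eassumption|].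
    replace (Derive (fun t => G t) r) with (G1 r) by (symmetry; apply is_derive_unique, Hd).
    replace (Derive (fun t => G1 t) r) with (G2 r) by (symmetry; apply is_derive_unique, Hd1).
    ring.
  - intros r Hr; pose proof (HG1_nonpos r Hr); pose proof (HG2_nonneg r Hr).
    assert (0 <= s * (1 - r) * G2 r) by (repeat apply Rmult_le_pos; lra).
    nra.
Qed.

End ConcaveComplement.

Section ShiftedRatio.

Variables (F F1 F2 : R -> R) (lo hi b : R).
Hypothesis HF : forall r, lo < r < hi -> is_derive F r (F1 r).
Hypothesis HF1 : forall r, lo < r < hi -> is_derive F1 r (F2 r).
Hypothesis HF_nonneg : forall r, lo < r < hi -> 0 <= F r.
Hypothesis Hb : 0 < b.

Definition shifted_ratio (r : R) : R := F r / (F r + b).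

Definition shifted_ratio1 (r : R) : R := b * F1 r / (F r + b) ^ 2.

Definition shifted_ratio2 (r : R) : R :=
  b * (F2 r * (F r + b) - 2 * F1 r ^ 2) / (F r + b) ^ 3.

Lemma is_derive_shifted_ratio (r : R) : lo < r < hi ->
  is_derive shifted_ratio r (shifted_ratio1 r).
Proof.
  intro Hr; pose proof (HF r Hr) as Hd; pose proof (HF_nonneg r Hr).
  unfold shifted_ratio, shifted_ratio1.
  auto_derive; [repeat split; try (eexists; exact Hd); lra|].
  replace (Derive (fun t => F t) r) with (F1 r) by (symmetry; apply is_derive_unique, Hd).
  field; lra.
Qed.

Lemma is_derive_shifted_ratio1 (r : R) : lo < r < hi ->
  is_derive shifted_ratio1 r (shifted_ratio2 r).
Proof.
  intro Hr; pose proof (HF r Hr) as Hd; pose proof (HF1 r Hr) as Hd1.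
  pose proof (HF_nonneg r Hr).
  unfold shifted_ratio1, shifted_ratio2.
  auto_derive.
  { repeat split; try (eexists; eassumption);
      repeat apply Rmult_integral_contrapositive_currified; auto with real; lra. }
  replace (Derive (fun t => F t) r) with (F1 r) by (symmetry; apply is_derive_unique, Hd).
  replace (Derive (fun t => F1 t) r) with (F2 r) by (symmetry; apply is_derive_unique, Hd1).
  field; lra.
Qed.

Lemma shifted_ratio1_nonpos (r : R) : lo < r < hi -> F1 r <= 0 -> shifted_ratio1 r <= 0.
Proof.
  intros Hr HF1r; pose proof (HF_nonneg r Hr); unfold shifted_ratio1.
  apply Rmult_le_0_r; [nra | left; apply Rinv_0_lt_compat, pow_lt; lra].
Qed.

Lemma shifted_ratio2_nonneg (r : R) : lo < r < hi ->
  2 * F1 r ^ 2 <= F2 r * (F r + b) -> 0 <= shifted_ratio2 r.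
Proof.
  intros Hr Hineq; pose proof (HF_nonneg r Hr); unfold shifted_ratio2.
  apply Rdiv_le_0_compat; [apply Rmult_le_pos; lra | apply pow_lt; lra].
Qed.

End ShiftedRatio.

Section LowPowerTime.

Variables (mu Ts Tw : R) (m : nat).
Hypotheses (Hmu : 0 < mu) (HTs : 0 < Ts) (HTw : 0 < Tw).

Let f := f_lowpower mu Ts (S m).
Let f1 := scaled_quot1 (lowpower_kernel m) (lowpower_kernel1 m) (mu * Ts) mu.
Let f2 :=
  scaled_quot2 (lowpower_kernel m) (lowpower_kernel1 m) (lowpower_kernel2 m) (mu * Ts) mu.

Let f_eq_near (r : R) : 0 < r ->
  locally r (fun t => scaled_quot (lowpower_kernel m) (mu * Ts) mu t = f t).
Proof.
  intro Hr; apply (filter_imp (fun t => 0 < t)); [|exact (open_gt 0 r Hr)].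
  intros t Ht; unfold f; rewrite f_lowpower_eq by lra; reflexivity.
Qed.

Let is_derive_f_lowpower (r : R) : 0 < r -> is_derive f r (f1 r).
Proof.
  intro Hr; apply (is_derive_ext_loc _ _ _ _ (f_eq_near r Hr)).
  apply is_derive_scaled_quot; [apply is_derive_lowpower_kernel | lra | lra].
Qed.

Let is_derive_Derive_f_lowpower (r : R) : 0 < r -> is_derive (Derive f) r (f2 r).
Proof.
  intro Hr; apply (is_derive_ext_loc f1).
  - apply (filter_imp (fun t => 0 < t)); [|exact (open_gt 0 r Hr)].
    intros t Ht; symmetry; apply is_derive_unique, is_derive_f_lowpower, Ht.
  - apply is_derive_scaled_quot1;
      [apply is_derive_lowpower_kernel | apply is_derive_lowpower_kernel1 | lra | lra].
Qed.

Lemma ex_derive_f_lowpower (r : R) : 0 < r -> ex_derive f r.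
Proof. intro Hr; eexists; exact (is_derive_f_lowpower r Hr). Qed.

Lemma ex_derive_Derive_f_lowpower (r : R) : 0 < r -> ex_derive (Derive f) r.
Proof. intro Hr; eexists; exact (is_derive_Derive_f_lowpower r Hr). Qed.

Let kernel_bounds (r : R) : 0 < r ->
  0 <= lowpower_kernel m (mu * Ts * r) /\ 0 <= - lowpower_kernel1 m (mu * Ts * r) <= 1 /\
  0 <= lowpower_kernel2 m (mu * Ts * r).
Proof.
  intro Hr; assert (Hx : 0 <= mu * Ts * r) by (apply Rmult_le_pos; nra).
  split; [|split]; [apply lowpower_kernel_ge0 | apply lowpower_kernel1_bounds
                   | apply lowpower_kernel2_ge0]; exact Hx.
Qed.

Lemma f_lowpower_ge0 (r : R) : 0 < r -> 0 <= f r.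
Proof.
  intro Hr; unfold f; rewrite f_lowpower_eq by lra.
  apply (scaled_quot_ge0 (lowpower_kernel m)); [lra | lra | apply kernel_bounds, Hr].
Qed.

Lemma Derive_f_lowpower_nonpos (r : R) : 0 < r -> Derive f r <= 0.
Proof.
  intro Hr; rewrite (is_derive_unique _ _ _ (is_derive_f_lowpower r Hr)).
  destruct (kernel_bounds r Hr) as [Hg [Hg1 _]].
  apply scaled_quot1_le0; [lra | nra | lra | exact Hg | exact Hg1].
Qed.

Lemma f_lowpower_derive2_ineq (r : R) : 0 < r ->
  2 * Derive f r ^ 2 <= Derive_n f 2 r * (f r + (Ts + Tw)).
Proof.
  intro Hr; change (Derive_n f 2 r) with (Derive (Derive f) r).
  rewrite (is_derive_unique _ _ _ (is_derive_f_lowpower r Hr)),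
    (is_derive_unique _ _ _ (is_derive_Derive_f_lowpower r Hr)).
  unfold f; rewrite f_lowpower_eq by lra.
  destruct (kernel_bounds r Hr) as [Hg [Hg1 Hg2]].
  apply scaled_quot_derive2_ineq; try assumption; nra.
Qed.

Lemma concave_on_E_energy (sigma_off : R) : 0 <= sigma_off < 1 ->
  concave_on 0 1 (E_energy mu Ts Tw sigma_off (S m)).
Proof.
  intros Hs x y t Hx Hy Ht.
  assert (HE : forall r, E_energy mu Ts Tw sigma_off (S m) r
                         = 1 - (1 - sigma_off) * (1 - r) * shifted_ratio f (Ts + Tw) r).
  { intro r; unfold E_energy, shifted_ratio; rewrite Rplus_assoc; reflexivity. }
  rewrite !HE; revert x y t Hx Hy Ht.
  assert (Hb : 0 < Ts + Tw) by lra.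
  assert (HF : forall r, 0 < r < 1 -> is_derive f r (Derive f r))
    by (intros r Hr; apply Derive_correct, ex_derive_f_lowpower; lra).
  assert (HF1 : forall r, 0 < r < 1 -> is_derive (Derive f) r (Derive_n f 2 r))
    by (intros r Hr; apply Derive_correct, ex_derive_Derive_f_lowpower; lra).
  assert (HF_nonneg : forall r, 0 < r < 1 -> 0 <= f r)
    by (intros r Hr; apply f_lowpower_ge0; lra).
  apply concave_on_one_sub_mul_compl with
    (shifted_ratio1 f (Derive f) (Ts + Tw))
    (shifted_ratio2 f (Derive f) (Derive_n f 2) (Ts + Tw));
    [ exact (is_derive_shifted_ratio _ _ _ _ _ HF HF_nonneg Hb)
    | exact (is_derive_shifted_ratio1 _ _ _ _ _ _ HF HF1 HF_nonneg Hb)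
    | intros r Hr; apply (shifted_ratio1_nonpos _ _ 0 1); auto;
      apply Derive_f_lowpower_nonpos; lra
    | intros r Hr; apply (shifted_ratio2_nonneg _ _ _ 0 1); auto;
      apply f_lowpower_derive2_ineq; lra
    | lra ].
Qed.

End LowPowerTime.

Theorem mainTheorem7 (mu Ts Tw : R) (Qw : nat) :
  0 < mu -> 0 < Ts -> 0 < Tw -> (1 <= Qw)%nat ->
  (forall rho, 0 < rho < 1 ->
     ex_derive (f_lowpower mu Ts Qw) rho /\
     ex_derive (Derive (f_lowpower mu Ts Qw)) rho /\
     Derive_n (f_lowpower mu Ts Qw) 2 rho * (f_lowpower mu Ts Qw rho + (Ts + Tw))
       >= 2 * (Derive (f_lowpower mu Ts Qw) rho) ^ 2)
  /\
  (forall sigma_off, 0 <= sigma_off < 1 ->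
     concave_on 0 1 (E_energy mu Ts Tw sigma_off Qw)).
Proof.
  intros Hmu HTs HTw HQw; destruct Qw as [|m]; [lia|].
  split.
  - intros rho Hrho; split; [|split].
    + apply ex_derive_f_lowpower; lra.
    + apply ex_derive_Derive_f_lowpower; lra.
    + apply Rle_ge, f_lowpower_derive2_ineq; lra.
  - intros sigma_off Hs; apply concave_on_E_energy; assumption.
Qed.
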